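(* Each of the axioms CORE, JR, PJR, EJR, PJR+, EJR+ and FJR (viewed as a mapping from approval profiles to the set of $k$-committees satisfying it) is a group-satisfaction-threshold (GST) axiom; that is, for each such axiom $X$ there exists a function $\tau:\mathcal A_k\times 2^{\mathcal E}\to\{0,1,\dots,k+1\}$ such that for every profile $P$ and every $W\in\mathcal A_k$: $W\in X(P)$ if and only if for all $G\subseteq\mathcal E$, $\left(\vec w_G-\frac{\tau(W,G)}{k}\vec 1\right)\cdot\mathrm{Hist}(P)<0$.
   Context: $\mathcal A=[m]$, $1\le k\le m$, $\mathcal A_k$ is the set of $k$-subsets of $\mathcal A$, $\mathcal E=2^{\mathcal A}$. A profile is $P=(A_1,\dots,A_n)\in\mathcal E^n$ ($n\ge1$ voters); $\mathrm{Hist}(P)\in\mathbb Z_{\ge0}^{\mathcal E}$ counts occurrences of each ballot. For $G\subseteq\mathcal E$, $\vec w_G\in\{0,1\}^{\mathcal E}$ is the indicator vector of $G$, and $\vec 1$ is the all-ones vector. A ''group'' is a set $N'\subseteq[n]$ of voters. For $\ell\ge1$, $N'$ is $\ell$-cohesive if $|N'|\ge\ell n/k$ and $|\bigcap_{j\in N'}A_j|\ge\ell$. - CORE: $W\in\mathcal A_k$ is in CORE$(P)$ iff for every nonempty $N'\subseteq[n]$ and every $W'\subseteq\mathcal A$ with $|W'|/k\le|N'|/n$ there is $j\in N'$ with $|A_j\cap W'|\le|A_j\cap W|$. - JR: for every 1-cohesive $N'$ there is $j\in N'$ with $|A_j\cap W|\ge1$. - EJR: for every $\ell\ge1$ and every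 $\ell$-cohesive $N'$ there is $j\in N'$ with $|A_j\cap W|\ge\ell$. - PJR: for every $\ell\ge1$ and every $\ell$-cohesive $N'$, $|W\cap\bigcup_{j\in N'}A_j|\ge\ell$. - EJR+: there are no $a\in\mathcal A\setminus W$, $\ell\ge1$ and $N'$ with $|N'|\ge\ell n/k$ such that every $j\in N'$ has $a\in A_j$ and $|A_j\cap W|<\ell$. - PJR+: there are no $a\in\mathcal A\setminus W$, $\ell\ge1$ and $N'$ with $|N'|\ge\ell n/k$ such that $a\in A_j$ for all $j\in N'$ and $|W\cap\bigcup_{j\in N'}A_j|<\ell$. - FJR: for every $\beta\ge1$, $T\subseteq\mathcal A$ and every $N'$ with $|N'|\ge|T|n/k$ and $|A_j\cap T|\ge\beta$ for all $j\in N'$, there is $j\in N'$ with $|A_j\cap W|\ge\beta$. *)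

From mathcomp Require Import all_boot all_order all_algebra.
Set Implicit Arguments. Unset Strict Implicit. Unset Printing Implicit Defensive.
Import Order.TTheory GRing.Theory Num.Theory.

(* Candidates: 'I_m.  Ballots (elements of E = 2^A): {set 'I_m}.
   A profile with n voters: P : 'I_n -> {set 'I_m}  (P j = A_j).
   Groups: N' : {set 'I_n}.  Quotients like l*n/k are taken in rat. *)

Section Properties.
Variables (m k n : nat) (P : 'I_n -> {set 'I_m}) (W : {set 'I_m}).
Local Open Scope ring_scope.

Definition large (l : nat) (N' : {set 'I_n}) : Prop :=
  (#|N'|%:R : rat) >= l%:R * n%:R / k%:R.

Definition cohesive (l : nat) (N' : {set 'I_n}) : Prop :=
  large l N' /\ (l <= #|\bigcap_(j in N') P j|)%N.

Definition CORE : Prop :=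
  forall (N' : {set 'I_n}) (W' : {set 'I_m}), N' != set0 ->
    (#|W'|%:R / k%:R : rat) <= #|N'|%:R / n%:R ->
    exists2 j, j \in N' & (#|P j :&: W'| <= #|P j :&: W|)%N.

Definition JR : Prop :=
  forall N' : {set 'I_n}, cohesive 1 N' ->
    exists2 j, j \in N' & (1 <= #|P j :&: W|)%N.

Definition EJR : Prop :=
  forall (l : nat) (N' : {set 'I_n}), (1 <= l)%N -> cohesive l N' ->
    exists2 j, j \in N' & (l <= #|P j :&: W|)%N.

Definition PJR : Prop :=
  forall (l : nat) (N' : {set 'I_n}), (1 <= l)%N -> cohesive l N' ->
    (l <= #|W :&: \bigcup_(j in N') P j|)%N.

Definition EJRplus : Prop :=
  ~ exists (a : 'I_m) (l : nat) (N' : {set 'I_n}),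
      [/\ a \notin W, (1 <= l)%N, large l N' &
          forall j, j \in N' -> a \in P j /\ (#|P j :&: W| < l)%N].

Definition PJRplus : Prop :=
  ~ exists (a : 'I_m) (l : nat) (N' : {set 'I_n}),
      [/\ a \notin W, (1 <= l)%N, large l N',
          (forall j, j \in N' -> a \in P j) &
          (#|W :&: \bigcup_(j in N') P j| < l)%N].

Definition FJR : Prop :=
  forall (beta : nat) (T : {set 'I_m}) (N' : {set 'I_n}),
    (1 <= beta)%N -> N' != set0 -> large #|T| N' ->
    (forall j, j \in N' -> (beta <= #|P j :&: T|)%N) ->
    exists2 j, j \in N' & (beta <= #|P j :&: W|)%N.

End Properties.

Inductive axiom_name := AxCORE | AxJR | AxPJR | AxEJR | AxPJRplus | AxEJRplus | AxFJR.

Definition satisfies (X : axiom_name) (m k n : nat)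
  (P : 'I_n -> {set 'I_m}) (W : {set 'I_m}) : Prop :=
  match X with
  | AxCORE => CORE k P W
  | AxJR => JR k P W
  | AxPJR => PJR k P W
  | AxEJR => EJR k P W
  | AxPJRplus => PJRplus k P W
  | AxEJRplus => EJRplus k P W
  | AxFJR => FJR k P W
  end.

Definition hist (m n : nat) (P : 'I_n -> {set 'I_m}) (B : {set 'I_m}) : nat :=
  #|[set j | P j == B]|.

(* (w_G - t/k * 1) . Hist(P) *)
Definition gst_value (m k n : nat) (P : 'I_n -> {set 'I_m})
  (G : {set {set 'I_m}}) (t : nat) : rat :=
  (\sum_(B : {set 'I_m})
     (((B \in G)%:R - t%:R / k%:R) * (hist P B)%:R))%R.

From mathcomp Require Import all_boot all_order all_algebra.
Set Implicit Arguments. Unset Strict Implicit. Unset Printing Implicit Defensive.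
Import Order.TTheory GRing.Theory Num.Theory.

(* Each axiom forbids a "blocking coalition": a witness d (a set of candidates,
   a candidate with a level, ...) together with a nonempty set N of voters such
   that |N| >= c(d) n / k and every ballot of N passes a test Q_W(d) that looks at
   that ballot alone.  So whether the voters whose ballots lie in a set G of
   ballots block depends only on their number and on tau(W, G), the least c(d)
   over the witnesses d passed by every ballot of G (or k + 1 if there is none,
   a threshold no set of at most n voters reaches).  As
   (w_G - tau/k 1) . Hist(P) = #{j | A_j in G} - tau n / k, the GST inequalities
   for all G say exactly that no coalition blocks. *)

Section GstValue.
Local Open Scope ring_scope.

Variables (m k n : nat) (P : 'I_n -> {set 'I_m}).

Lemma sum_hist (F : {set 'I_m} -> rat) :
  \sum_B F B * (hist P B)%:R = \sum_j F (P j).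
Proof.
rewrite (partition_big P xpredT) //=; apply: eq_bigr => B _.
rewrite (eq_bigr (fun=> F B)); last by move=> j /eqP ->.
rewrite sumr_const mulr_natr /hist; congr (_ *+ _).
by apply: eq_card => j; rewrite inE.
Qed.

Lemma gst_valueE G t :
  gst_value k P G t = #|[set j | P j \in G]|%:R - t%:R * n%:R / k%:R.
Proof.
rewrite /gst_value sum_hist sumrB; congr (_ - _).
  rewrite -natr_sum; congr _%:R; rewrite -sum1_card [RHS]big_mkcond /=.
  by apply: eq_bigr => j _; rewrite inE; case: (_ \in G).
by rewrite sumr_const card_ord -[_ *+ n]mulr_natr mulrAC.
Qed.

Lemma gst_value_lt0 G t :
  gst_value k P G t < 0 <-> ~ large k t [set j | P j \in G].
Proof. by rewrite gst_valueE subr_lt0 ltNge /large; split=> /negP. Qed.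

End GstValue.

Section Large.
Local Open Scope ring_scope.
Variables (k n : nat).
Implicit Types (l : nat) (N : {set 'I_n}).

Lemma large_mono l l' N N' :
  (l' <= l)%N -> (#|N| <= #|N'|)%N -> large k l N -> large k l' N'.
Proof.
rewrite /large => le_l le_N large_N.
apply: le_trans (_ : _ <= #|N|%:R) _; last by rewrite ler_nat.
apply: le_trans large_N.
by rewrite ler_wpM2r ?invr_ge0 // ler_wpM2r ?ler_nat.
Qed.

Hypotheses (k_gt0 : (0 < k)%N) (n_gt0 : (0 < n)%N).

Lemma large_leq_k l N : large k l N -> (l <= k)%N.
Proof.
have N_le_n : (#|N| <= n)%N by rewrite -[n in (_ <= n)%N]card_ord max_card.
rewrite /large ler_pdivrMr ?ltr0n // -!natrM ler_nat => /leq_trans.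
by move/(_ _ (leq_mul N_le_n (leqnn k))); rewrite mulnC leq_pmul2l.
Qed.

Lemma large_neq0 l N : (0 < l)%N -> large k l N -> N != set0.
Proof.
move=> l_gt0; apply: contraTneq => ->; rewrite /large cards0 -ltNge.
by rewrite divr_gt0 ?mulr_gt0 ?ltr0n.
Qed.

End Large.

Definition blocked (m k n : nat) (D : Type) (c : D -> nat)
    (Q : D -> pred {set 'I_m}) (P : 'I_n -> {set 'I_m}) : Prop :=
  exists d (N : {set 'I_n}),
    [/\ N != set0, large k (c d) N & forall j, j \in N -> Q d (P j)].

Section Threshold.
Variables (m k : nat) (D : finType) (c : D -> nat) (Q : D -> pred {set 'I_m}).
Implicit Type G : {set {set 'I_m}}.

Definition threshold_candidate G t :=
  (t == k.+1) || [exists d, [&& G != set0, [forall B in G, Q d B] & c d == t]].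

Lemma threshold_candidate_top G : exists t, threshold_candidate G t.
Proof. by exists k.+1; rewrite /threshold_candidate eqxx. Qed.

Definition gst_threshold G : nat := ex_minn (threshold_candidate_top G).

Lemma gst_threshold_le G : gst_threshold G <= k.+1.
Proof.
rewrite /gst_threshold; case: ex_minnP => t _; apply.
by rewrite /threshold_candidate eqxx.
Qed.

Lemma gst_threshold_min G d :
  G != set0 -> (forall B, B \in G -> Q d B) -> gst_threshold G <= c d.
Proof.
move=> G_neq0 /forall_inP QG; rewrite /gst_threshold; case: ex_minnP => t _; apply.
by apply/orP; right; apply/existsP; exists d; rewrite G_neq0 QG eqxx.
Qed.

Lemma gst_thresholdP G :
  gst_threshold G = k.+1 \/
  exists2 d, G != set0 /\ (forall B, B \in G -> Q d B) & c d = gst_threshold G.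
Proof.
rewrite /gst_threshold; case: ex_minnP => t /orP[/eqP|/existsP[d]] t_cand _.
  by left.
by case/and3P: t_cand => G_neq0 /forall_inP QG /eqP cd; right; exists d.
Qed.

Variables (n : nat) (P : 'I_n -> {set 'I_m}).
Hypotheses (k_gt0 : 0 < k) (n_gt0 : 0 < n).
Hypothesis c_gt0 : forall d B, Q d B -> 0 < c d.

Lemma unblocked_gst_lt0 :
  ~ blocked k c Q P <-> forall G, (gst_value k P G (gst_threshold G) < 0)%R.
Proof.
split=> [unblocked G | gst_lt0 [d [N [N_neq0 large_N QN]]]].
  apply/gst_value_lt0 => large_G.
  have [t_top | [d [G_neq0 QG] t_cd]] := gst_thresholdP G.
    by move: (large_leq_k k_gt0 n_gt0 large_G); rewrite t_top ltnn.
  apply: unblocked; exists d, [set j | P j \in G]; rewrite t_cd; split=> //.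
    have [B GB] := set0Pn _ G_neq0.
    by apply: large_neq0 large_G; rewrite // -t_cd (c_gt0 (QG B GB)).
  by move=> j; rewrite inE => /QG.
apply: (gst_value_lt0 _ _ _ _).1 (gst_lt0 (P @: N)) _.
apply: large_mono large_N.
  by apply: gst_threshold_min => [|_ /imsetP[j Nj ->]]; rewrite ?imset_eq0 ?QN.
by apply/subset_leq_card/subsetP => j Nj; rewrite inE imset_f.
Qed.

End Threshold.

Lemma exists_subset_card (T : finType) (A : {set T}) l :
  l <= #|A| -> exists2 S : {set T}, S \subset A & #|S| = l.
Proof.
case/card_geqP=> s [uniq_s <- sA]; exists [set x in s].
  by apply/subsetP=> x; rewrite inE => /sA.
by rewrite cardsE; apply/card_uniqP.
Qed.

Section AxiomsAsBlocking.
Variables (m k n : nat) (P : 'I_n -> {set 'I_m}) (W : {set 'I_m}).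
Hypotheses (k_gt0 : 0 < k) (n_gt0 : 0 < n).

Lemma card_sub_bigcap (N : {set 'I_n}) (S : {set 'I_m}) :
  (forall j, j \in N -> S \subset P j) -> #|S| <= #|\bigcap_(j in N) P j|.
Proof. by move=> SN; apply/subset_leq_card/bigcapsP. Qed.

Lemma card_approved_winners_le (N : {set 'I_n}) (U : {set 'I_m}) :
  (forall j, j \in N -> P j :&: W \subset U) ->
  #|W :&: \bigcup_(j in N) P j| <= #|U|.
Proof.
move=> sub_U; apply/subset_leq_card/subsetP => x /setIP[Wx /bigcupP[j Nj Pjx]].
by apply: subsetP (sub_U j Nj) _ _; rewrite inE Pjx.
Qed.

Lemma approved_winners_sub (N : {set 'I_n}) j :
  j \in N -> P j :&: W \subset W :&: \bigcup_(i in N) P i.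
Proof.
by move=> Nj; apply/subsetP => x /setIP[Pjx Wx]; rewrite inE Wx; apply/bigcupP; exists j.
Qed.

Lemma CORE_unblocked :
  CORE k P W <->
  ~ blocked k (fun W' : {set 'I_m} => #|W'|)
      (fun W' B => #|B :&: W| < #|B :&: W'|) P.
Proof.
have ratio_large l (N : {set 'I_n}) :
  (l%:R / k%:R <= #|N|%:R / n%:R :> rat)%R <-> large k l N.
  by rewrite /large ler_pdivlMr ?ltr0n // mulrAC.
split=> [core [W' [N [N_neq0 /ratio_large large_N blockN]]] | unblocked N W' N_neq0].
  by have [j Nj] := core N W' N_neq0 large_N; rewrite leqNgt blockN.
move/ratio_large => large_N.
apply/exists_inP; apply: contra_notT unblocked => /exists_inPn no_j.
by exists W', N; split=> // j Nj; rewrite ltnNge no_j.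
Qed.

Lemma JR_unblocked :
  JR k P W <->
  ~ blocked k (fun=> 1) (fun (a : 'I_m) B => (a \in B) && (B :&: W == set0)) P.
Proof.
split=> [jr [a [N [_ large_N blockN]]] | unblocked N [large_N cap_gt0]].
  have [|j Nj] := jr N; last by case/andP: (blockN j Nj) => _ /eqP->; rewrite cards0.
  split=> //; apply/card_gt0P; exists a.
  by apply/bigcapP=> j /blockN /andP[].
have [a /bigcapP a_cap] := card_gt0P cap_gt0.
apply/exists_inP; apply: contra_notT unblocked => /exists_inPn no_j.
exists a, N; split=> //; first by apply: large_neq0 large_N.
by move=> j Nj; rewrite a_cap // -cards_eq0 -leqn0 leqNgt no_j.
Qed.

Lemma EJR_unblocked :
  EJR k P W <->
  ~ blocked k (fun S : {set 'I_m} => #|S|)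
      (fun S B => (S \subset B) && (#|B :&: W| < #|S|)) P.
Proof.
split=> [ejr [S [N [N_neq0 large_N blockN]]] | unblocked l N l_gt0 [large_N l_cap]].
  have [j0 Nj0] := set0Pn _ N_neq0.
  have S_gt0 : 0 < #|S| by case/andP: (blockN j0 Nj0) => _; apply: leq_ltn_trans.
  have S_cap : #|S| <= #|\bigcap_(j in N) P j|.
    by apply: card_sub_bigcap => j /blockN /andP[].
  have [j Nj] := ejr _ _ S_gt0 (conj large_N S_cap).
  by case/andP: (blockN j Nj) => _; rewrite ltnNge => /negP.
have [S S_cap S_l] := exists_subset_card l_cap.
apply/exists_inP; apply: contra_notT unblocked => /exists_inPn no_j.
exists S, N; rewrite S_l; split=> //; first by apply: large_neq0 large_N.
by move=> j Nj; rewrite (subset_trans S_cap (bigcap_inf _ Nj)) ltnNge no_j.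
Qed.

(* [U] bounds the winners approved by the coalition from above, which turns
   PJR's condition on the union of the ballots into a test of each ballot. *)
Lemma PJR_unblocked :
  PJR k P W <->
  ~ blocked k (fun d : {set 'I_m} * {set 'I_m} => #|d.1|)
      (fun d B => [&& d.1 \subset B, B :&: W \subset d.2 & #|d.2| < #|d.1|]) P.
Proof.
split=> [pjr [[S U] [N [N_neq0 large_N blockN]]] | unblocked l N l_gt0 [large_N l_cap]].
  have [j0 Nj0] := set0Pn _ N_neq0.
  have U_lt_S : #|U| < #|S| by case/and3P: (blockN j0 Nj0).
  have S_cap : #|S| <= #|\bigcap_(j in N) P j|.
    by apply: card_sub_bigcap => j /blockN /and3P[].
  have cover_U : #|W :&: \bigcup_(j in N) P j| <= #|U|.
    by apply: card_approved_winners_le => j /blockN /and3P[].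
  have S_gt0 := leq_ltn_trans (leq0n _) U_lt_S.
  have := leq_trans (pjr _ _ S_gt0 (conj large_N S_cap)) cover_U.
  by rewrite leqNgt U_lt_S.
have [S S_cap S_l] := exists_subset_card l_cap.
rewrite leqNgt; apply/negP => cover_lt; apply: unblocked.
exists (S, W :&: \bigcup_(j in N) P j), N; rewrite /= S_l; split=> //.
  by apply: large_neq0 large_N.
move=> j Nj; rewrite (subset_trans S_cap (bigcap_inf _ Nj)) cover_lt andbT.
exact: approved_winners_sub.
Qed.

Lemma EJRplus_unblocked :
  EJRplus k P W <->
  ~ blocked k (fun d : 'I_m * 'I_k.+1 => d.2 : nat)
      (fun d B => [&& d.1 \notin W, d.1 \in B & #|B :&: W| < d.2]) P.
Proof.
apply: not_iff_compat; split=> [[a [l [N [aW l_gt0 large_N blockN]]]] |].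
  have l_lt : l < k.+1 by rewrite ltnS (large_leq_k k_gt0 n_gt0 large_N).
  exists (a, Ordinal l_lt), N; split=> //=; first by apply: large_neq0 large_N.
  by move=> j /blockN[-> ->]; rewrite aW.
case=> -[a l] [N [N_neq0 large_N blockN]]; have [j0 Nj0] := set0Pn _ N_neq0.
exists a, l, N; split=> //.
- by case/and3P: (blockN j0 Nj0).
- by case/and3P: (blockN j0 Nj0) => _ _ /(leq_ltn_trans (leq0n _)).
- by move=> j /blockN /and3P[_ -> ->].
Qed.

Lemma PJRplus_unblocked :
  PJRplus k P W <->
  ~ blocked k (fun d : 'I_m * 'I_k.+1 * {set 'I_m} => d.1.2 : nat)
      (fun d B => [&& d.1.1 \notin W, d.1.1 \in B, B :&: W \subset d.2
                    & #|d.2| < d.1.2]) P.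
Proof.
apply: not_iff_compat; split=> [[a [l [N [aW l_gt0 large_N aN cover_lt]]]] |].
  have l_lt : l < k.+1 by rewrite ltnS (large_leq_k k_gt0 n_gt0 large_N).
  exists (a, Ordinal l_lt, W :&: \bigcup_(j in N) P j), N; split=> //=.
    by apply: large_neq0 large_N.
  by move=> j Nj; rewrite aW aN // approved_winners_sub.
case=> -[[a l] U] [N [N_neq0 large_N blockN]]; have [j0 Nj0] := set0Pn _ N_neq0.
have U_lt_l : #|U| < l by case/and4P: (blockN j0 Nj0).
exists a, l, N; split=> //.
- by case/and4P: (blockN j0 Nj0).
- exact: leq_ltn_trans (leq0n _) U_lt_l.
- by move=> j /blockN /and4P[].
- apply: leq_ltn_trans U_lt_l.
  by apply: card_approved_winners_le => j /blockN /and4P[].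
Qed.

Lemma FJR_unblocked :
  FJR k P W <->
  ~ blocked k (fun d : 'I_m.+1 * {set 'I_m} => #|d.2|)
      (fun d B => (d.1 <= #|B :&: d.2|) && (#|B :&: W| < d.1)) P.
Proof.
split=> [fjr [[b T] [N [N_neq0 large_N blockN]]]
        | unblocked b T N b_gt0 N_neq0 large_N T_b].
  have [j0 Nj0] := set0Pn _ N_neq0.
  have b_gt0 : 0 < b by case/andP: (blockN j0 Nj0) => _ /(leq_ltn_trans (leq0n _)).
  have T_b j : j \in N -> b <= #|P j :&: T| by case/blockN/andP.
  have [j Nj] := fjr b T N b_gt0 N_neq0 large_N T_b.
  by case/andP: (blockN j Nj) => _; rewrite ltnNge => /negP.
apply/exists_inP; apply: contra_notT unblocked => /exists_inPn no_j.
have [j0 Nj0] := set0Pn _ N_neq0.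
have b_lt : b < m.+1.
  by rewrite ltnS (leq_trans (T_b j0 Nj0)) // -[m in _ <= m]card_ord max_card.
by exists (Ordinal b_lt, T), N; split=> // j Nj /=; rewrite T_b // ltnNge no_j.
Qed.

End AxiomsAsBlocking.

Lemma satisfies_unblocked m k (X : axiom_name) : 0 < k ->
  exists (D : finType) (c : D -> nat) (Q : {set 'I_m} -> D -> pred {set 'I_m}),
    (forall n (P : 'I_n -> {set 'I_m}) W,
      0 < n -> satisfies X k P W <-> ~ blocked k c (Q W) P) /\
    (forall W d B, Q W d B -> 0 < c d).
Proof.
move=> k_gt0; case: X; eexists _, _, _; split.
- by move=> n P W n_gt0; apply: CORE_unblocked.
- move=> W W' B /= /(leq_ltn_trans (leq0n _)) /leq_trans; apply.
  exact/subset_leq_card/subsetIr.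
- by move=> n P W n_gt0; apply: JR_unblocked.
- by [].
- by move=> n P W n_gt0; apply: PJR_unblocked.
- by move=> W d B /and3P[_ _ /(leq_ltn_trans (leq0n _))].
- by move=> n P W n_gt0; apply: EJR_unblocked.
- by move=> W S B /andP[_ /(leq_ltn_trans (leq0n _))].
- by move=> n P W n_gt0; apply: PJRplus_unblocked.
- by move=> W d B /and4P[_ _ _ /(leq_ltn_trans (leq0n _))].
- by move=> n P W n_gt0; apply: EJRplus_unblocked.
- by move=> W d B /and3P[_ _ /(leq_ltn_trans (leq0n _))].
- by move=> n P W n_gt0; apply: FJR_unblocked.
- move=> W d B /andP[b_cap /(leq_ltn_trans (leq0n _)) b_gt0].
  by apply: leq_trans b_gt0 (leq_trans b_cap _); apply/subset_leq_card/subsetIr.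
Qed.

Lemma unblocked_gst_threshold m k (D : finType) (c : D -> nat)
    (Q : {set 'I_m} -> D -> pred {set 'I_m}) :
  0 < k -> (forall W d B, Q W d B -> 0 < c d) ->
  exists tau : {set 'I_m} -> {set {set 'I_m}} -> 'I_k.+2,
    forall n (P : 'I_n -> {set 'I_m}) W, 0 < n ->
      ~ blocked k c (Q W) P <-> forall G, (gst_value k P G (tau W G) < 0)%R.
Proof.
move=> k_gt0 c_gt0.
exists (fun W G => inord (gst_threshold k c (Q W) G)) => n P W n_gt0.
apply: iff_trans (unblocked_gst_lt0 P k_gt0 n_gt0 (c_gt0 W)) _.
have tauE G :
  (inord (gst_threshold k c (Q W) G) : 'I_k.+2) = gst_threshold k c (Q W) G :> nat.
  by rewrite inordK // ltnS gst_threshold_le.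
by split=> gst_lt0 G; move: (gst_lt0 G); rewrite tauE.
Qed.

Theorem theorem3 (m k : nat) (hk1 : 1 <= k) (hkm : k <= m) (X : axiom_name) :
  exists tau : {set 'I_m} -> {set {set 'I_m}} -> 'I_k.+2,
    forall (n : nat) (P : 'I_n -> {set 'I_m}) (W : {set 'I_m}),
      0 < n -> #|W| = k ->
      (satisfies X k P W <->
       forall G : {set {set 'I_m}}, (gst_value k P G (tau W G) < 0)%R).
Proof.
have [D [c [Q [satisfiesE c_gt0]]]] := satisfies_unblocked m X hk1.
have [tau gstE] := unblocked_gst_threshold hk1 c_gt0.
exists tau => n P W n_gt0 _.
exact: iff_trans (satisfiesE n P W n_gt0) (gstE n P W n_gt0).
Qed.
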